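(* Let $G$ be a torsion-free group, $\mathbb{F}$ a field, $\alpha$ a zero divisor in $\mathbb{F}[G]$ and $\beta$ a mate of $\alpha$. If $|supp(\alpha)|\le 5$, then $\langle h^{-1}supp(\alpha)\rangle=\langle supp(\beta)g^{-1}\rangle$ for all $h\in supp(\alpha)$ and all $g\in supp(\beta)$.
   Context: A zero divisor is a non-zero $\alpha$ with $\alpha\beta'=0$ for some non-zero $\beta'$. A mate of $\alpha$ is a non-zero $\beta\in\mathbb{F}[G]$ with $\alpha\beta=0$ such that $|supp(\beta)|\le|supp(\beta')|$ for every non-zero $\beta'\in\mathbb{F}[G]$ with $\alpha\beta'=0$. Here $supp(\gamma)=\{x\in G:\gamma_x\ne0\}$. *)

From HB Require Import structures.
From mathcomp Require Import all_boot all_algebra.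
From mathcomp Require Import finmap.
Set Implicit Arguments. Unset Strict Implicit. Unset Printing Implicit Defensive.
Import GRing.Theory.

Local Open Scope fset_scope.

Definition grpalg (G : groupType) (F : fieldType) := {fsfun G -> F with 0%R}.

Definition supp (G : groupType) (F : fieldType) (a : grpalg G F) : {fset G} :=
  finsupp a.

Definition gmul (G : groupType) (F : fieldType) (a b : grpalg G F) (x : G) : F :=
  (\sum_(y <- supp a) a y * b (y^-1 * x)%g)%R.

Definition gnonzero (G : groupType) (F : fieldType) (a : grpalg G F) : Prop :=
  exists x, a x <> 0%R.

Definition gmul_is_zero (G : groupType) (F : fieldType) (a b : grpalg G F) : Prop :=
  forall x, gmul a b x = 0%R.

Definition zero_divisor (G : groupType) (F : fieldType) (a : grpalg G F) : Prop :=
  gnonzero a /\ exists b', gnonzero b' /\ gmul_is_zero a b'.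

Definition mate (G : groupType) (F : fieldType) (a b : grpalg G F) : Prop :=
  gnonzero b /\ gmul_is_zero a b /\
  forall b', gnonzero b' -> gmul_is_zero a b' -> (#|` supp b| <= #|` supp b'|)%N.

Definition torsion_free (G : groupType) : Prop :=
  forall (x : G) (n : nat), (0 < n)%N -> (x ^+ n)%g = 1%g -> x = 1%g.

Definition is_subgroup (G : groupType) (H : G -> Prop) : Prop :=
  H 1%g /\ (forall x y, H x -> H y -> H (x * y)%g) /\ (forall x, H x -> H (x^-1)%g).

Definition gen (G : groupType) (S : G -> Prop) : G -> Prop :=
  fun x => forall H : G -> Prop, is_subgroup H -> (forall s, S s -> H s) -> H x.

Definition lmul_set (G : groupType) (h : G) (A : {fset G}) : G -> Prop :=
  fun x => exists2 y, y \in A & x = (h^-1 * y)%g.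
Definition rmul_set (G : groupType) (A : {fset G}) (g : G) : G -> Prop :=
  fun x => exists2 y, y \in A & x = (y * g^-1)%g.

From mathcomp Require Import all_boot all_algebra.
From mathcomp Require Import finmap boolp.
Set Implicit Arguments. Unset Strict Implicit. Unset Printing Implicit Defensive.
Import GRing.Theory.
Local Open Scope fset_scope.

(* Put L = <h^-1 supp(a)> and K = <supp(b) g^-1>.  Restricting b to the right
   coset L g still gives a b = 0, since every y in supp(a) lies in h L; by
   minimality of the mate, supp(b) lies in L g, i.e. K <= L.  Dually, cutting a
   along the left cosets h K and its complement splits a b = 0 into two zero
   products.  In a torsion-free group an element with at most two support
   points is not a zero divisor (a two-term relation forces b to be nonzero
   along an infinite orbit), so both pieces would need three support points,
   impossible when |supp(a)| <= 5.  Hence supp(a) lies in h K, i.e. L <= K. *)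

Section Groups.
Variable G : groupType.
Implicit Types (S H : G -> Prop) (u v : G).

Lemma gen_subgroup S : is_subgroup (gen S).
Proof.
split; first by move=> H [].
split=> [x y Sx Sy H HH HS | x Sx H HH HS]; have [_ [HM HV]] := HH.
  by apply: HM; [apply: Sx | apply: Sy].
by apply: HV; apply: Sx.
Qed.

Lemma gen_in S s : S s -> gen S s.
Proof. by move=> Ss H _; apply. Qed.

Lemma subgroupMl H u v : is_subgroup H -> H u -> H (u * v)%g <-> H v.
Proof.
move=> [_ [HM HV]] Hu; split=> [Huv | Hv]; last exact: HM.
by rewrite -(mulKg u v); apply: HM => //; apply: HV.
Qed.

Lemma subgroupMr H u v : is_subgroup H -> H v -> H (u * v)%g <-> H u.
Proof.
move=> [_ [HM HV]] Hv; split=> [Huv | Hu]; last exact: HM.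
by rewrite -(mulgK v u); apply: HM => //; apply: HV.
Qed.

Lemma torsion_free_expg_inj (t : G) :
  torsion_free G -> t != 1%g -> injective (fun n => t ^+ n)%g.
Proof.
move=> tf t1; suff le_inj i j : (i <= j)%N -> (t ^+ i)%g = (t ^+ j)%g -> i = j.
  by move=> i j e; case: (leqP i j) => [|/ltnW] ij; [|symmetry]; apply: le_inj.
move=> ij; rewrite -(subnKC ij) expgnDr -{1}(mulg1 (t ^+ i)%g) => /mulgI.
case: (j - i)%N => [|k /esym /(tf t k.+1 isT) /eqP]; first by rewrite addn0.
by rewrite (negbTE t1).
Qed.

End Groups.

Lemma inj_seq_notin_fset (T : choiceType) (A : {fset T}) (f : nat -> T) :
  injective f -> ~ (forall n, f n \in A).
Proof.
move=> finj fA; pose s := [seq f n | n <- iota 0 (#|` A|).+1].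
have us : uniq s by rewrite map_inj_uniq ?iota_uniq.
have sA : {subset s <= enum_fset A} by move=> _ /mapP [n _ ->]; apply: fA.
by have := uniq_leq_size us sA; rewrite size_map size_iota ltnn.
Qed.

Lemma fsubset_fset2 (T : choiceType) (A : {fset T}) x :
  (#|` A| <= 2)%N -> x \in A -> exists y, A `<=` [fset x; y].
Proof.
move=> A2 xA; have [A0 | [y yA]] := fset_0Vmem (A `\ x).
  by exists x; rewrite fsetUid -fsetD_eq0 A0.
exists y; rewrite -(fsetD1K xA) fsetUS // -(eqP (_ : [fset y] == A `\ x)) //.
by rewrite eqEfcard fsub1set yA cardfs1; move: A2; rewrite (cardfsD1 x) xA.
Qed.

Section GroupAlgebra.
Variables (G : groupType) (F : fieldType).
Implicit Types (a b : grpalg G F) (P R : G -> Prop).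

Lemma mem_supp a x : (x \in supp a) = (a x != 0%R).
Proof. by rewrite /supp mem_finsupp. Qed.

Lemma gnonzero_supp a x : x \in supp a -> gnonzero a.
Proof. by rewrite mem_supp => /eqP; exists x. Qed.

Lemma gmul_fsubset a b S x : supp a `<=` S ->
  gmul a b x = (\sum_(y <- S) a y * b (y^-1 * x)%g)%R.
Proof.
move=> aS; apply: big_fset_incl => // y _.
by rewrite mem_supp negbK => /eqP ->; rewrite mul0r.
Qed.

Definition restr a P : grpalg G F :=
  [fsfun x in supp a => if `[< P x >] then a x else 0%R].

Lemma restrE a P x : restr a P x = if `[< P x >] then a x else 0%R.
Proof.
rewrite fsfunE; case: ifP => // /negbT.
by rewrite mem_supp negbK => /eqP ->; case: ifP.
Qed.

Lemma mem_supp_restr a P x : (x \in supp (restr a P)) = `[< P x >] && (x \in supp a).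
Proof. by rewrite !mem_supp restrE; case: ifP; rewrite ?eqxx. Qed.

Lemma supp_restr_sub a P : supp (restr a P) `<=` supp a.
Proof. by apply/fsubsetP => y; rewrite mem_supp_restr => /andP[]. Qed.

Lemma card_supp_restrC a P :
  (#|` supp (restr a P)| + #|` supp (restr a (fun x => ~ P x))|)%N = #|` supp a|.
Proof.
rewrite -(cardfsID (supp (restr a P)) (supp a)) (fsetIidPr (supp_restr_sub a P)).
congr (_ + #|` _|)%N; apply/fsetP => x.
by rewrite in_fsetD !mem_supp_restr asbool_neg; case: (x \in supp a); rewrite ?andbT ?andbF.
Qed.

Lemma gmul_zero_restrl a b P R : gmul_is_zero a b ->
  (forall x y, y \in supp a -> b (y^-1 * x)%g != 0%R -> P y <-> R x) ->
  gmul_is_zero (restr a P) b.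
Proof.
move=> ab PR x; rewrite (gmul_fsubset _ _ (supp_restr_sub a P)).
have [Rx | nRx] := pselect (R x).
  rewrite -[RHS](ab x); apply: eq_big_seq => y ya; rewrite restrE.
  have [->|bn] := eqVneq (b (y^-1 * x)%g) 0%R; first by rewrite !mulr0.
  by rewrite asboolT // (PR x y ya bn).
apply: big1_seq => y /andP[_ ya]; rewrite restrE.
have [->|bn] := eqVneq (b (y^-1 * x)%g) 0%R; first by rewrite mulr0.
by rewrite asboolF ?mul0r // => /(PR x y ya bn).
Qed.

Lemma gmul_zero_restrr a b P R : gmul_is_zero a b ->
  (forall x y, y \in supp a -> P (y^-1 * x)%g <-> R x) ->
  gmul_is_zero a (restr b P).
Proof.
move=> ab PR x; have [Rx | nRx] := pselect (R x).
  by rewrite -[RHS](ab x); apply: eq_big_seq => y ya; rewrite restrE asboolT // PR.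
by apply: big1_seq => y /andP[_ ya]; rewrite restrE asboolF ?mulr0 // PR.
Qed.

(* (a b)_(x0 u) = a_x0 b_u + a_y b_(y^-1 x0 u); the degenerate case y = x0
   covers one-point supports. *)
Lemma gmul_zero_supp2_shift a b x0 y u :
  supp a `<=` [fset x0; y] -> a x0 != 0%R -> gmul_is_zero a b -> b u != 0%R ->
  x0 != y /\ b (y^-1 * x0 * u)%g != 0%R.
Proof.
move=> a2 ax0 ab bu; have := ab (x0 * u)%g; rewrite (gmul_fsubset _ _ a2).
have [<- | x0y] := eqVneq x0 y.
  by rewrite fsetUid big_seq_fset1 mulKg => /eqP; rewrite mulf_eq0 (negbTE ax0) (negbTE bu).
rewrite big_fsetU1 ?inE // big_seq_fset1 mulKg mulgA => /eqP; rewrite addr_eq0 => /eqP e.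
split=> //; apply: contraNneq (mulf_neq0 ax0 bu) => b0.
by rewrite e b0 mulr0 oppr0.
Qed.

Lemma zero_divisor_supp_gt2 a b : torsion_free G ->
  gnonzero a -> gnonzero b -> gmul_is_zero a b -> (2 < #|` supp a|)%N.
Proof.
move=> tf [x0 /eqP ax0] [w /eqP bw] ab; rewrite ltnNge; apply/negP => a2.
have x0a : x0 \in supp a by rewrite mem_supp.
have [y ax0y] := fsubset_fset2 a2 x0a.
pose t := (y^-1 * x0)%g.
have t1 : t != 1%g.
  have [x0y _] := gmul_zero_supp2_shift ax0y ax0 ab bw.
  by apply: contra x0y => /eqP t1; rewrite -(mulVKg y x0) -/t t1 mulg1.
have orbit n : b (t ^+ n * w)%g != 0%R.
  elim: n => [|n IH]; first by rewrite expg0 mul1g.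
  by rewrite expgS -mulgA; have [] := gmul_zero_supp2_shift ax0y ax0 ab IH.
apply: (@inj_seq_notin_fset _ (supp b) (fun n => t ^+ n * w)%g).
  by move=> i j /mulIg; apply: torsion_free_expg_inj.
by move=> n; rewrite mem_supp.
Qed.

Lemma mate_supp_rcoset a b L h g : mate a b -> is_subgroup L ->
  (forall y, y \in supp a -> L (h^-1 * y)%g) -> g \in supp b ->
  forall w, w \in supp b -> L (w * g^-1)%g.
Proof.
move=> [_ [ab bmin]] Lsub La gb.
pose P w := L (w * g^-1)%g.
have Pb : gmul_is_zero a (restr b P).
  apply: (gmul_zero_restrr (R := fun x => L (h^-1 * x * g^-1)%g)) ab _ => x y ya.
  have -> : (h^-1 * x * g^-1 = h^-1 * y * (y^-1 * x * g^-1))%g by rewrite !mulgA mulgK.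
  by rewrite (subgroupMl _ Lsub (La y ya)).
have Pg : g \in supp (restr b P).
  by rewrite mem_supp_restr gb asboolT // /P mulgV; case: Lsub.
have bP : supp (restr b P) = supp b.
  by apply/eqP; rewrite eqEfcard supp_restr_sub (bmin _ (gnonzero_supp Pg) Pb).
by move=> w; rewrite -bP mem_supp_restr => /andP[/asboolP].
Qed.

Lemma supp_le5_lcoset a b K h g : torsion_free G ->
  (#|` supp a| <= 5)%N -> gnonzero b -> gmul_is_zero a b -> is_subgroup K ->
  (forall w, w \in supp b -> K (w * g^-1)%g) -> h \in supp a ->
  forall y, y \in supp a -> K (h^-1 * y)%g.
Proof.
move=> tf a5 bnz ab Ksub Kb ha y ya; apply: contrapT => nKy.
pose Q z := K (h^-1 * z)%g.
have fibre x z : z \in supp a -> b (z^-1 * x)%g != 0%R ->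
    Q z <-> K (h^-1 * x * g^-1)%g.
  move=> _ bz; have -> : (h^-1 * x * g^-1 = h^-1 * z * (z^-1 * x * g^-1))%g.
    by rewrite !mulgA mulgK.
  by rewrite (subgroupMr _ Ksub (Kb _ _)) // mem_supp.
have fibreC x z : z \in supp a -> b (z^-1 * x)%g != 0%R ->
    ~ Q z <-> ~ K (h^-1 * x * g^-1)%g.
  by move=> za bz; split=> nQ ?; apply: nQ; apply/(fibre x z za bz).
have QC3 : (2 < #|` supp (restr a (fun z => ~ Q z))|)%N.
  apply: zero_divisor_supp_gt2 tf _ bnz (gmul_zero_restrl ab fibreC).
  by apply: (@gnonzero_supp _ y); rewrite mem_supp_restr ya asboolT.
have Q3 : (2 < #|` supp (restr a Q)|)%N.
  apply: zero_divisor_supp_gt2 tf _ bnz (gmul_zero_restrl ab fibre).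
  by apply: (@gnonzero_supp _ h); rewrite mem_supp_restr ha asboolT // /Q mulVg; case: Ksub.
by move: a5; rewrite -(card_supp_restrC a Q) leqNgt (leq_add Q3 QC3).
Qed.

End GroupAlgebra.

Theorem mainTheorem6 (G : groupType) (F : fieldType) (a b : grpalg G F) :
  torsion_free G ->
  zero_divisor a ->
  mate a b ->
  (#|` supp a| <= 5)%N ->
  forall h g, h \in supp a -> g \in supp b ->
    forall x, gen (lmul_set h (supp a)) x <-> gen (rmul_set (supp b) g) x.
Proof.
move=> tf _ mab a5 h g ha gb x; have [bnz [ab _]] := mab.
have Lsub := gen_subgroup (lmul_set h (supp a)).
have Ksub := gen_subgroup (rmul_set (supp b) g).
split=> gen_x; apply: gen_x => // _ [y ya ->].
- apply: (supp_le5_lcoset tf a5 bnz ab Ksub _ ha) => // w wb.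
  by apply: gen_in; exists w.
- apply: (mate_supp_rcoset mab Lsub _ gb) => // z za.
  by apply: gen_in; exists z.
Qed.
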